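(* Let $p$ be a prime, $c\ge1$, $G$ a finite $p$-group, $B$ a cyclic subgroup of $Z(G)$ of order $p^k$, and suppose $A=G/B$ is generated by $d$ elements. Let $G\cong F/R$ with $F$ free, and let $S$ be the normal subgroup of $F$ containing $R$ with $B=S/R$ (so $A\cong F/S$). Then $$\left|\,[S,{}_cF]/[R,{}_cF]\,\right|\le p^{dk(d+1)^{c-1}}.$$
   Context: For subgroups $U,V$ of a group, $[U,{}_0V]=U$ and $[U,{}_{i+1}V]=[[U,{}_iV],V]$. *)

(* the finite p-group G lives in a finGroupType; the (infinite)
   free group F is an abstract group given by an explicit carrier and axioms. *)
From HB Require Import structures.
From mathcomp Require Import all_boot all_fingroup all_solvable.
Set Implicit Arguments. Unset Strict Implicit. Unset Printing Implicit Defensive.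

Record grp := Grp {
  gcar :> Type;
  gmul : gcar -> gcar -> gcar;
  ginv : gcar -> gcar;
  gone : gcar;
  gmulA : forall x y z, gmul x (gmul y z) = gmul (gmul x y) z;
  gmul1 : forall x, gmul gone x = x;
  gmulV : forall x, gmul (ginv x) x = gone }.

Arguments gmul {g}. Arguments ginv {g}. Arguments gone {g}.

Definition is_ghom (F H : grp) (f : F -> H) : Prop :=
  forall x y, f (gmul x y) = gmul (f x) (f y).

Definition is_free (F : grp) : Prop :=
  exists (X : Type) (iota : X -> F),
    forall (H : grp) (f : X -> H),
      exists h : F -> H,
        [/\ is_ghom h, (forall x, h (iota x) = f x) &
            forall h' : F -> H, is_ghom h' -> (forall x, h' (iota x) = f x) ->
              forall y, h' y = h y].

(* Commutator [x, y] = x^-1 y^-1 x y (MathComp convention). *)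
Definition gcomm (F : grp) (x y : F) : F :=
  gmul (gmul (ginv x) (ginv y)) (gmul x y).

Inductive gen (F : grp) (P : F -> Prop) : F -> Prop :=
  | gen_in x : P x -> gen P x
  | gen_one : gen P gone
  | gen_inv x : gen P x -> gen P (ginv x)
  | gen_mul x y : gen P x -> gen P y -> gen P (gmul x y).

Definition commg_sub (F : grp) (U V : F -> Prop) : F -> Prop :=
  gen (fun z => exists u v, [/\ U u, V v & z = gcomm u v]).

Fixpoint iter_comm (F : grp) (U V : F -> Prop) (n : nat) : F -> Prop :=
  match n with
  | 0 => U
  | n'.+1 => commg_sub (iter_comm U V n') V
  end.

Definition gfull (F : grp) : F -> Prop := fun _ => True.

(* index_le H K n : the coset space H/K (K a subgroup of H) has at most n
   elements, i.e. at most n left cosets t K (t in H) cover H. *)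
Definition index_le (F : grp) (H K : F -> Prop) (n : nat) : Prop :=
  exists l : seq F,
    [/\ size l <= n,
        (forall i, i < size l -> H (nth gone l i)) &
        (forall h, H h -> exists2 i, i < size l & K (gmul (ginv (nth gone l i)) h))].

(* Modulo [R, _c F], the group [S, _c F] is generated by the iterated commutators
   [b, y_1, ..., y_c], where b lifts a generator of B, y_1 runs over lifts x_1, ..., x_d of
   generators of A, and y_2, ..., y_c over b, x_1, ..., x_d. Indeed F is generated by the x_i,
   b and R; commutation with a fixed element is multiplicative modulo the next term of the
   series; and by the three subgroup lemma [[S, _i F], R] <= [R, _(i+1) F]. Since [S, F] <= R,
   these d (d+1)^(c-1) generators are central modulo [R, _c F], and since b^(p^k) lies in R,
   their (p^k)-th powers lie in [R, _c F]. An abelian group generated by m elements of order dividing p^k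
   has at most p^(k m) elements. *)

From Pilot Require Import Defs.
From HB Require Import structures.
From mathcomp Require Import all_boot all_fingroup all_solvable.
Require Stdlib.Lists.List.
Set Implicit Arguments. Unset Strict Implicit. Unset Printing Implicit Defensive.

Local Notation "[ U , '_' n ]" := (iter_comm U (@gfull _) n) (format "[ U ,  '_' n ]").

Section GroupLaws.
Variable F : grp.
Implicit Types x y : F.

Lemma gmulKg x y : gmul (ginv x) (gmul x y) = y.
Proof. by rewrite gmulA gmulV gmul1. Qed.

Lemma gmulgV x : gmul x (ginv x) = gone.
Proof.
have e : gmul (ginv (ginv x)) (ginv x) = gone by rewrite gmulV.
by rewrite -[gmul x _]gmul1 -{1}e -gmulA (gmulA (ginv x)) gmulV gmul1 e.
Qed.

Lemma gmulg1 x : gmul x gone = x.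
Proof. by rewrite -(gmulV x) gmulA gmulgV gmul1. Qed.

Lemma gmulKVg x y : gmul x (gmul (ginv x) y) = y.
Proof. by rewrite gmulA gmulgV gmul1. Qed.

Lemma ginv_unique x y : gmul x y = gone -> ginv x = y.
Proof. by move=> xy1; rewrite -[ginv x]gmulg1 -xy1 gmulKg. Qed.

Lemma ginvK x : ginv (ginv x) = x.
Proof. by apply: ginv_unique; rewrite gmulV. Qed.

Lemma ginvM x y : ginv (gmul x y) = gmul (ginv y) (ginv x).
Proof. by apply: ginv_unique; rewrite -gmulA gmulKVg gmulgV. Qed.

Lemma ginv1 : ginv (gone : F) = gone.
Proof. by apply: ginv_unique; rewrite gmulg1. Qed.

End GroupLaws.

Definition gconj (F : grp) (x g : F) : F := gmul (ginv g) (gmul x g).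

Fixpoint gpow (F : grp) (x : F) (e : nat) : F :=
  if e is e'.+1 then gmul x (gpow x e') else gone.

(* Normal form of a word: right-associated, with adjacent inverses cancelled. *)
Ltac gsimpl := rewrite /gcomm /gconj;
  repeat progress rewrite -?gmulA ?gmul1 ?gmulg1 ?gmulV ?gmulgV ?gmulKg ?gmulKVg
                          ?ginvM ?ginvK ?ginv1.

Lemma gcommV (F : grp) (x y : F) : ginv (gcomm x y) = gcomm y x.
Proof. by gsimpl. Qed.

(* The Hall-Witt identity, solved for [[v, f], w]. *)
Lemma hall_witt (F : grp) (v f w : F) :
  gcomm (gcomm v f) w =
  gconj (ginv (gmul (gconj (gcomm (gcomm (ginv f) (ginv w)) v) w)
                    (gconj (gcomm (gcomm w (ginv v)) (ginv f)) v))) f.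
Proof. by gsimpl. Qed.

Section Subgroups.
Variable F : grp.
Implicit Types (x y f g : F) (P U V H : F -> Prop).

Record is_subgrp H : Prop := {
  subgrp1 : H gone;
  subgrpM : forall x y, H x -> H y -> H (gmul x y);
  subgrpV : forall x, H x -> H (ginv x) }.

Record is_normal H : Prop := {
  normal_subgrp : is_subgrp H;
  normal_conj : forall x g, H x -> H (gconj x g) }.

Lemma gen_subgrp P : is_subgrp (gen P).
Proof. by split; [exact: gen_one | exact: gen_mul | exact: gen_inv]. Qed.

Lemma gen_min P H : is_subgrp H -> (forall x, P x -> H x) -> forall x, gen P x -> H x.
Proof. by case=> H1 HM HV sPH x; elim=> //; auto. Qed.

Lemma gen_normal P : (forall x g, P x -> P (gconj x g)) -> is_normal (gen P).
Proof.
move=> PJ; split=> [|x g]; first exact: gen_subgrp.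
elim=> [y Py|| y _ IHy| y z _ IHy _ IHz].
- by apply: gen_in; apply: PJ.
- have -> : gconj (gone : F) g = gone by gsimpl.
  exact: gen_one.
- have -> : gconj (ginv y) g = ginv (gconj y g) by gsimpl.
  exact: gen_inv.
- have -> : gconj (gmul y z) g = gmul (gconj y g) (gconj z g) by gsimpl.
  exact: gen_mul.
Qed.

Lemma gpow_mem H x e : is_subgrp H -> H x -> H (gpow x e).
Proof. by move=> sH Hx; elim: e => [|e IHe] /=; [case: sH | apply: subgrpM]. Qed.

Lemma commg_sub_normal U : is_normal U -> is_normal (Defs.commg_sub U (@gfull F)).
Proof.
move=> nU; apply: gen_normal => z g [u [v [Uu _ ->]]].
exists (gconj u g), (gconj v g); split=> //; first exact: normal_conj.
by gsimpl.
Qed.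

Lemma iter_comm_normal U n : is_normal U -> is_normal [U, _ n].
Proof. by move=> nU; elim: n => //= n; apply: commg_sub_normal. Qed.

Lemma iter_comm_mono U V n : (forall x, U x -> V x) -> forall x, [U, _ n] x -> [V, _ n] x.
Proof.
move=> sUV; elim: n => //= n IHn; apply: gen_min; first exact: gen_subgrp.
by move=> _ [u [v [Uu _ ->]]]; apply: gen_in; exists u, v; split; auto.
Qed.

Lemma iter_commSl U V n : iter_comm U V n.+1 = iter_comm (Defs.commg_sub U V) V n.
Proof. by elim: n => //= n ->. Qed.

Lemma mem_iter_commS U n x f : [U, _ n] x -> [U, _ n.+1] (gcomm x f).
Proof. by move=> Ux; apply: gen_in; exists x, f. Qed.

Lemma iter_comm_three_subgroup U R i j u w : is_normal U -> is_normal R ->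
  [U, _ i] u -> [R, _ j] w -> [R, _ (i + j).+1] (gcomm u w).
Proof.
move=> nU nR; elim: i j u w => [|i IHi] j u w Uu Rw.
  rewrite -gcommV; apply: subgrpV (mem_iter_commS _ Rw).
  exact: normal_subgrp (iter_comm_normal _ nR).
have nK := iter_comm_normal (i.+1 + j).+1 nR; have sK := normal_subgrp nK.
have sRn n := normal_subgrp (iter_comm_normal n nR).
elim: Uu => [_ [v [f [Uv _ ->]]]||y _ IHy| y z _ IHy _ IHz].
- rewrite hall_witt; apply: (normal_conj nK); apply: (subgrpV sK).
  apply: (subgrpM sK); apply: (normal_conj nK).
  + rewrite -gcommV addSn -addnS; apply: (subgrpV (sRn _)); apply: IHi => //.
    rewrite -gcommV; apply: (subgrpV (sRn _)); apply: mem_iter_commS.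
    exact: (subgrpV (sRn _)).
  + rewrite addSn; apply: mem_iter_commS; rewrite -gcommV; apply: (subgrpV (sRn _)).
    by apply: IHi => //; apply: (subgrpV (normal_subgrp (iter_comm_normal _ nU))).
- have -> : gcomm (gone : F) w = gone by gsimpl.
  exact: subgrp1 sK.
- have -> : gcomm (ginv y) w = ginv (gconj (gcomm y w) (ginv y)) by gsimpl.
  by apply: (subgrpV sK); apply: (normal_conj nK).
- have -> : gcomm (gmul y z) w = gmul (gconj (gcomm y w) z) (gcomm z w) by gsimpl.
  by apply: (subgrpM sK) => //; apply: (normal_conj nK).
Qed.

End Subgroups.

Section CommutatorsModulo.
Variables (F : grp) (M : F -> Prop).
Hypothesis sM : is_subgrp M.
Implicit Types (x y f g : F) (P : F -> Prop).

Lemma gen_commr_closed P x :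
  (forall f g, M (gcomm (gcomm x f) g)) -> (forall y, P y -> M (gcomm x y)) ->
  forall f, gen P f -> M (gcomm x f).
Proof.
move=> Mxfg MxP f; elim=> [y /MxP //|| f' _ Mf| f' g _ Mf _ Mg].
- have -> : gcomm x gone = gone by gsimpl.
  exact: subgrp1 sM.
- have -> : gcomm x (ginv f') = ginv (gmul (gcomm x f') (gcomm (gcomm x f') (ginv f')))
    by gsimpl.
  by apply: (subgrpV sM); apply: (subgrpM sM).
- have -> : gcomm x (gmul f' g) = gmul (gcomm x g) (gmul (gcomm x f') (gcomm (gcomm x f') g))
    by gsimpl.
  by do 2![apply: (subgrpM sM) => //].
Qed.

Lemma gen_comml_closed P :
  (forall x f y, gen P x -> M (gcomm (gcomm x f) y)) -> (forall x f, P x -> M (gcomm x f)) ->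
  forall x f, gen P x -> M (gcomm x f).
Proof.
move=> Mxfy MP x f gx; elim: gx f => [y /MP //|| y gy My| y z gy My _ Mz] f.
- have -> : gcomm gone f = gone by gsimpl.
  exact: subgrp1 sM.
- have -> : gcomm (ginv y) f = ginv (gmul (gcomm y f) (gcomm (gcomm y f) (ginv y)))
    by gsimpl.
  by apply: (subgrpV sM); apply: (subgrpM sM); [apply: My | apply: Mxfy].
- have -> : gcomm (gmul y z) f = gmul (gcomm y f) (gmul (gcomm (gcomm y f) z) (gcomm z f))
    by gsimpl.
  by apply: (subgrpM sM); [|apply: (subgrpM sM)]; [apply: My | apply: Mxfy | apply: Mz].
Qed.

End CommutatorsModulo.

Section Powers.
Variable F : grp.
Implicit Types (x f : F) (K : F -> Prop).

Lemma gpowD x m n : gpow x (m + n) = gmul (gpow x m) (gpow x n).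
Proof. by elim: m => /= [|m IHm]; rewrite ?gmul1 // IHm gmulA. Qed.

Lemma gpowC x m n : gmul (gpow x m) (gpow x n) = gmul (gpow x n) (gpow x m).
Proof. by rewrite -!gpowD addnC. Qed.

Lemma gpowM x m n : gpow x (m * n) = gpow (gpow x m) n.
Proof. by elim: n => [|n IHn]; rewrite ?muln0 // mulnS gpowD IHn. Qed.

Definition central_mod K x := forall f, K (gcomm x f).

Lemma central_mod_pow K x e : is_normal K -> central_mod K x -> central_mod K (gpow x e).
Proof.
move=> nK cx f; have sK := normal_subgrp nK; elim: e => [|e IHe] /=.
  have -> : gcomm gone f = gone by gsimpl.
  exact: subgrp1 sK.
have -> : gcomm (gmul x (gpow x e)) f =
          gmul (gconj (gcomm x f) (gpow x e)) (gcomm (gpow x e) f) by gsimpl.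
by apply: (subgrpM sK) IHe; apply: (normal_conj nK).
Qed.

End Powers.

Section Lists.
Variable T : Type.
Implicit Types (x : T) (s : seq T).

Lemma In_nth x0 s i : i < size s -> List.In (nth x0 s i) s.
Proof. by elim: s i => //= x s IHs [|i] /=; auto. Qed.

Lemma In_nthP x0 s x : List.In x s -> exists2 i, i < size s & nth x0 s i = x.
Proof. by elim: s => //= y s IHs [<-|/IHs [i ? <-]]; [exists 0 | exists i.+1]. Qed.

Lemma In_allpairs (A B : Type) (f : A -> B -> T) (s1 : seq A) (s2 : seq B) z :
  List.In z [seq f a b | a <- s1, b <- s2] <->
  exists a b, [/\ List.In a s1, List.In b s2 & z = f a b].
Proof.
elim: s1 => [|a s1 IHs] /=; first by split=> // -[? [? []]].
rewrite List.in_app_iff IHs List.in_map_iff; split.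
- by case=> [[b [<- ?]]|[a' [b [? ? ->]]]]; [exists a, b | exists a', b]; split; auto.
- by case=> a' [b [[<-|?] ? ->]]; [left; exists b | right; exists a', b].
Qed.

End Lists.

Lemma In_iota m n : m < n -> List.In m (iota 0 n).
Proof.
move=> lt_mn; have := In_nth 0 (_ : m < size (iota 0 n)).
by rewrite size_iota nth_iota // add0n; apply.
Qed.

Lemma eq_index_le (F : grp) (H H' K : F -> Prop) m :
  (forall x, H x <-> H' x) -> index_le H' K m -> index_le H K m.
Proof.
move=> eqHH' [l [size_l H'l covl]]; exists l; split=> // [i /H'l /eqHH' //|h /eqHH'].
exact: covl.
Qed.

Lemma index_le_leq (F : grp) (H K : F -> Prop) m n :
  m <= n -> index_le H K m -> index_le H K n.
Proof. by move=> le_mn [l [size_l Hl covl]]; exists l; split=> //; apply: leq_trans le_mn. Qed.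

Definition gen_mod (F : grp) (K : F -> Prop) (L : seq F) : F -> Prop :=
  gen (fun x => List.In x L \/ K x).

Section CountingModulo.
Variables (F : grp) (K : F -> Prop) (N : nat).
Hypotheses (nK : is_normal K) (N_gt0 : 0 < N).
Let sK := normal_subgrp nK.
Implicit Types (x h t : F) (L : seq F).

Lemma gen_mod_cons_pow t L : central_mod K t -> K (gpow t N) ->
  forall h, gen_mod K (t :: L) h -> exists e, gen_mod K L (gmul (ginv (gpow t e)) h).
Proof.
move=> ct tN; have sH := @gen_subgrp F (fun x => List.In x L \/ K x).
have KH x : K x -> gen_mod K L x by move=> Kx; apply: gen_in; right.
pose Q h := exists e, gen_mod K L (gmul (ginv (gpow t e)) h).
have Q_K x : gen_mod K L x -> Q x by exists 0; rewrite /= ginv1 gmul1.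
apply: (@gen_min _ _ Q); last first.
  move=> x [[<-|Lx]|Kx]; last exact/Q_K/KH.
    by exists 1; rewrite /= gmulg1 gmulV; apply: subgrp1 sH.
  by apply: Q_K; apply: gen_in; left.
split; first by apply: Q_K; apply: subgrp1 sH.
- move=> h1 h2 [e1 H1] [e2 H2]; exists (e1 + e2).
  set m1 := gmul _ h1 in H1; set m2 := gmul _ h2 in H2.
  have -> : gmul (ginv (gpow t (e1 + e2))) (gmul h1 h2) =
            gmul m1 (gmul (gcomm m1 (gpow t e2)) m2).
    by rewrite /m1 /m2 gpowD; gsimpl.
  apply: (subgrpM sH) H1 _; apply: (subgrpM sH) _ H2; apply: KH.
  by rewrite -gcommV; apply: (subgrpV sK); apply: central_mod_pow.
- (* t^-e = t^((N - 1) e) modulo K, since t^N lies in K. *)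
  move=> h [e He]; exists (N.-1 * e).
  set m := gmul _ h in He.
  have -> : gmul (ginv (gpow t (N.-1 * e))) (ginv h) =
            ginv (gmul (gpow t (N * e)) (gmul m (gcomm m (gpow t (N.-1 * e))))).
    have -> : N * e = e + N.-1 * e by rewrite -mulSn prednK.
    by rewrite gpowD /m; gsimpl.
  apply: (subgrpV sH); apply: (subgrpM sH); first by apply: KH; rewrite gpowM; apply: gpow_mem.
  apply: (subgrpM sH) He _; apply: KH.
  by rewrite -gcommV; apply: (subgrpV sK); apply: central_mod_pow.
Qed.

Lemma gen_mod_cons_pow_lt t L : central_mod K t -> K (gpow t N) ->
  forall h, gen_mod K (t :: L) h -> exists2 e, e < N & gen_mod K L (gmul (ginv (gpow t e)) h).
Proof.
move=> ct tN h /(gen_mod_cons_pow ct tN) [e He]; exists (e %% N); first by rewrite ltn_mod.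
have -> : gmul (ginv (gpow t (e %% N))) h =
          gmul (gpow t (e %/ N * N)) (gmul (ginv (gpow t e)) h).
  by rewrite {3}(divn_eq e N) gpowD gpowC; gsimpl.
apply: (subgrpM (gen_subgrp _)) He; apply: gen_in; right.
by rewrite mulnC gpowM; apply: gpow_mem.
Qed.

Fixpoint reps L : seq F :=
  if L is t :: L' then [seq gmul (gpow t e) r | e <- iota 0 N, r <- reps L'] else [:: gone].

Lemma size_reps L : size (reps L) = N ^ size L.
Proof. by elim: L => //= t L IHL; rewrite size_allpairs size_iota IHL expnS. Qed.

Lemma reps_gen_mod L r : List.In r (reps L) -> gen_mod K L r.
Proof.
elim: L r => /= [|t L IHL] r; first by case=> // <-; apply: gen_one.
case/In_allpairs => e [r' [_ /IHL Lr' ->]]; apply: gen_mul.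
  by apply: gpow_mem; [apply: gen_subgrp | apply: gen_in; left; left].
apply: gen_min Lr' => [|x [Lx|Kx]]; first exact: gen_subgrp.
  by apply: gen_in; left; right.
by apply: gen_in; right.
Qed.

Lemma gen_mod_reps L : (forall t, List.In t L -> central_mod K t /\ K (gpow t N)) ->
  forall h, gen_mod K L h -> exists2 r, List.In r (reps L) & K (gmul (ginv r) h).
Proof.
elim: L => [_|t L IHL tL] h /=.
  move=> /(gen_min sK) Kh; exists gone; first by left.
  by rewrite ginv1 gmul1; apply: Kh => x [[]|].
have [ct tN] := tL t (or_introl erefl).
case/(gen_mod_cons_pow_lt ct tN) => e lt_eN /(IHL (fun x Lx => tL x (or_intror Lx))) [r Lr Kr].
exists (gmul (gpow t e) r); last by rewrite ginvM -gmulA.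
by apply/In_allpairs; exists e, r; split => //; apply: In_iota.
Qed.

Lemma index_le_gen_mod L : (forall t, List.In t L -> central_mod K t /\ K (gpow t N)) ->
  index_le (gen_mod K L) K (N ^ size L).
Proof.
move=> tL; exists (reps L); split; first by rewrite size_reps.
  by move=> i lt_i; apply/reps_gen_mod/In_nth.
move=> h /(gen_mod_reps tL) [r /(In_nthP gone) [i lt_i <-]]; by exists i.
Qed.

End CountingModulo.

Section CentralCyclicExtension.
Variables (F : grp) (R S : F -> Prop) (N : nat) (b : F) (xs : seq F).
Hypotheses (nR : is_normal R) (nS : is_normal S).
Hypotheses (sRS : forall x, R x -> S x) (cSF : forall s f, S s -> R (gcomm s f)).
Hypotheses (N_gt0 : 0 < N) (Sb : S b) (RbN : R (gpow b N)).
Hypothesis S_gen : forall s, S s -> exists e, R (gmul (ginv (gpow b e)) s).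
Hypothesis F_gen : forall f, gen_mod S xs f.

Let sRi n : is_subgrp [R, _ n] := normal_subgrp (iter_comm_normal n nR).
Let sSi n : is_subgrp [S, _ n] := normal_subgrp (iter_comm_normal n nS).

Lemma iter_commS_sub n x : [S, _ n.+1] x -> [R, _ n] x.
Proof.
rewrite iter_commSl; apply: iter_comm_mono; apply: gen_min; first exact: sRi 0.
by move=> _ [u [v [Su _ ->]]]; apply: cSF.
Qed.

Lemma iter_comm_RS n x : [R, _ n] x -> [S, _ n] x.
Proof. exact: iter_comm_mono. Qed.

Lemma S_gen_mod L s : S s -> gen_mod R (b :: L) s.
Proof.
case/S_gen=> e Re; have -> : s = gmul (gpow b e) (gmul (ginv (gpow b e)) s) by gsimpl.
apply: gen_mul; last by apply: gen_in; right.
by apply: gpow_mem; [apply: gen_subgrp | apply: gen_in; left; left].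
Qed.

Lemma F_gen_mod f : gen_mod R (b :: xs) f.
Proof.
apply: gen_min (F_gen f) => [|x [xsx|Sx]]; first exact: gen_subgrp.
  by apply: gen_in; left; right.
exact: S_gen_mod.
Qed.

(* Commutation with f is a homomorphism on [S, _n F] modulo [R, _(n+1) F]. *)
Lemma comm_pow_mod n u f e : [S, _ n] u ->
  [R, _ n.+1] (gmul (ginv (gpow (gcomm u f) e)) (gcomm (gpow u e) f)).
Proof.
move=> Su; elim: e => /= [|e IHe].
  have -> : gmul (ginv gone) (gcomm (gone : F) f) = gone by gsimpl.
  exact: subgrp1 (sRi n.+1).
set a := gpow (gcomm u f) e in IHe *; set c := gpow u e in IHe *.
have Rk : [R, _ n.+1] (gcomm (gcomm u f) c).
  by apply: mem_iter_commS; apply: iter_commS_sub; apply: mem_iter_commS.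
have -> : gmul (ginv (gmul (gcomm u f) a)) (gcomm (gmul u c) f) =
          gmul (gconj (gcomm (gcomm u f) c) a) (gmul (ginv a) (gcomm c f)) by gsimpl.
by apply: (subgrpM (sRi n.+1)) IHe; apply: (normal_conj (iter_comm_normal n.+1 nR)).
Qed.

(* The commutators [b, y_1, ..., y_n] with y_1 in xs and y_2, ..., y_n in b :: xs;
   y_1 = b is excluded since [b, b] = 1. *)
Fixpoint comm_gens n : seq F :=
  if n is n'.+1 then
    [seq gcomm t y | t <- comm_gens n', y <- if n' is 0 then xs else b :: xs]
  else [:: b].

Lemma size_comm_gens n : size (comm_gens n.+1) = size xs * (size xs).+1 ^ n.
Proof.
elim: n => [|n IHn]; first by rewrite /= cats0 size_map muln1.
rewrite [comm_gens _.+2]/comm_gens -/(comm_gens n.+1) size_allpairs IHn /=.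
by rewrite expnS mulnCA mulnC.
Qed.

Lemma comm_gens_sub n t : List.In t (comm_gens n) -> [S, _ n] t.
Proof.
elim: n t => [_ [<-|[]] //|n IHn _ /In_allpairs [t [y [Tt _ ->]]]].
exact/mem_iter_commS/IHn.
Qed.

Lemma comm_gens_pow n t : List.In t (comm_gens n) -> [R, _ n] (gpow t N).
Proof.
elim: n t => [_ [<-|[]] //|n IHn _ /In_allpairs [t [y [Tt _ ->]]]].
have Rty : [R, _ n.+1] (gcomm (gpow t N) y) by apply/mem_iter_commS/IHn.
have := comm_pow_mod y N (comm_gens_sub Tt); set a := gpow _ N => Ra.
have -> : a = gmul (gcomm (gpow t N) y) (ginv (gmul (ginv a) (gcomm (gpow t N) y))) by gsimpl.
by apply: (subgrpM (sRi _)) Rty _; apply: (subgrpV (sRi _)).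
Qed.

Lemma comm_gens_comm n t f : List.In t (comm_gens n) ->
  gen_mod [R, _ n.+1] (comm_gens n.+1) (gcomm t f).
Proof.
move=> Tt; have sM := @gen_subgrp F (fun x => List.In x (comm_gens n.+1) \/ [R, _ n.+1] x).
have RM x : [R, _ n.+1] x -> gen_mod [R, _ n.+1] (comm_gens n.+1) x.
  by move=> Rx; apply: gen_in; right.
have TM y : List.In y (if n is 0 then xs else b :: xs) ->
            gen_mod [R, _ n.+1] (comm_gens n.+1) (gcomm t y).
  by move=> Yy; apply: gen_in; left; apply/In_allpairs; exists t, y.
apply: (gen_commr_closed sM) (F_gen_mod f) => [f' g|y [[<-|xsy]|Ry]].
- by apply/RM/mem_iter_commS/iter_commS_sub/mem_iter_commS/comm_gens_sub.
- case: n Tt TM {sM RM} => [[<-|[]] _|n _ TM]; last by apply: TM; left.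
  have -> : gcomm b b = gone by gsimpl.
  exact: subgrp1 (gen_subgrp _).
- by apply: TM; case: (n) => //; right.
- by apply: RM; rewrite -[n.+1]addn0; apply: iter_comm_three_subgroup (comm_gens_sub Tt) _.
Qed.

Lemma comm_gens_gen n u : [S, _ n] u -> gen_mod [R, _ n] (comm_gens n) u.
Proof.
elim: n u => [u /(S_gen_mod [::]) //|n IHn].
have sM := @gen_subgrp F (fun x => List.In x (comm_gens n.+1) \/ [R, _ n.+1] x).
apply: (gen_min sM) => _ [v [f [/IHn Tv _ ->]]].
apply: (gen_comml_closed sM) Tv => [x f' y Tx|x f' [Tx|Rx]].
- apply: gen_in; right; apply/mem_iter_commS/iter_commS_sub/mem_iter_commS.
  by apply: (gen_min (sSi n)) Tx => z [/comm_gens_sub|/iter_comm_RS].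
- exact: comm_gens_comm.
- by apply: gen_in; right; apply: mem_iter_commS.
Qed.

Lemma index_le_iter_comm n :
  index_le [S, _ n.+1] [R, _ n.+1] (N ^ (size xs * (size xs).+1 ^ n)).
Proof.
rewrite -size_comm_gens; apply: (@eq_index_le _ _ (gen_mod [R, _ n.+1] (comm_gens n.+1))).
  move=> x; split=> [/comm_gens_gen //|]; apply: (gen_min (sSi _)) => y.
  by case=> [/comm_gens_sub|/iter_comm_RS].
apply: (index_le_gen_mod (iter_comm_normal n.+1 nR) N_gt0) => t Tt.
split; last exact: comm_gens_pow.
by move=> f; apply/iter_commS_sub/mem_iter_commS/comm_gens_sub.
Qed.

End CentralCyclicExtension.

Section HomToFinGroup.
Variables (F : grp) (gT : finGroupType) (phi : F -> gT).
Hypothesis phiM : forall x y, phi (gmul x y) = (phi x * phi y)%g.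

Lemma ghom1 : phi gone = 1%g.
Proof. by apply: (mulgI (phi gone)); rewrite -phiM gmul1 mulg1. Qed.

Lemma ghomV x : phi (ginv x) = (phi x)^-1%g.
Proof. by apply: (mulIg (phi x)); rewrite -phiM gmulV ghom1 mulVg. Qed.

Lemma ghomX x e : phi (gpow x e) = (phi x ^+ e)%g.
Proof. by elim: e => [|e IHe] /=; rewrite ?ghom1 // phiM IHe expgS. Qed.

Lemma ghomR x y : phi (gcomm x y) = [~ phi x, phi y]%g.
Proof. by rewrite /gcomm !phiM !ghomV /commg /conjg !mulgA. Qed.

Lemma ghomJ x g : phi (gconj x g) = (phi x ^ phi g)%g.
Proof. by rewrite /gconj !phiM ghomV /conjg mulgA. Qed.

End HomToFinGroup.

Section CentralExtensionPresentation.
Variables (gT : finGroupType) (G B : {group gT}) (F : grp) (phi : F -> gT) (R S : F -> Prop).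
Hypotheses (phiM : forall x y, phi (gmul x y) = (phi x * phi y)%g)
           (phiG : forall x, phi x \in G) (phi_onto : forall g, g \in G -> exists x, phi x = g).
Hypotheses (Rdef : forall x, R x <-> phi x = 1%g) (Sdef : forall x, S x <-> phi x \in B).
Hypothesis sBZ : (B \subset 'Z(G))%g.

Let nBG : (G \subset 'N(B))%g := normal_norm (sub_center_normal sBZ).

Lemma ker_normal : is_normal R.
Proof.
split; first split.
- by apply/Rdef; rewrite ghom1.
- by move=> x y /Rdef Rx /Rdef Ry; apply/Rdef; rewrite phiM Rx Ry mulg1.
- by move=> x /Rdef Rx; apply/Rdef; rewrite ghomV // Rx invg1.
by move=> x g /Rdef Rx; apply/Rdef; rewrite ghomJ // Rx conj1g.
Qed.

Lemma preimage_normal : is_normal S.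
Proof.
split; first split.
- by apply/Sdef; rewrite ghom1 // group1.
- by move=> x y /Sdef Sx /Sdef Sy; apply/Sdef; rewrite phiM groupM.
- by move=> x /Sdef Sx; apply/Sdef; rewrite ghomV // groupV.
by move=> x g /Sdef Sx; apply/Sdef; rewrite ghomJ // memJ_norm // (subsetP nBG).
Qed.

Lemma ker_sub_preimage x : R x -> S x.
Proof. by move=> /Rdef Rx; apply/Sdef; rewrite Rx group1. Qed.

Lemma comm_preimage_ker s f : S s -> R (gcomm s f).
Proof.
move=> /Sdef Bs; apply/Rdef; rewrite ghomR //; apply/eqP/commgP.
by symmetry; apply: centerC (phiG f) _ (subsetP sBZ _ Bs).
Qed.

Lemma cyclic_preimage_gen : cyclic B -> exists b,
  [/\ S b, R (gpow b #|B|) & forall s, S s -> exists e, R (gmul (ginv (gpow b e)) s)].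
Proof.
case/cyclicP=> beta defB.
have [b phib] : exists b, phi b = beta.
  by apply/phi_onto/(subsetP (center_sub G))/(subsetP sBZ); rewrite defB cycle_id.
exists b; split.
- by apply/Sdef; rewrite phib defB cycle_id.
- by apply/Rdef; rewrite ghomX // phib defB expg_order.
move=> s /Sdef; rewrite defB => /cycleP [e phis]; exists e.
by apply/Rdef; rewrite phiM ghomV // ghomX // phib phis mulVg.
Qed.

Lemma lift_cosets (s : seq (coset_of B)) : {subset s <= G / B}%g -> exists xs : seq F,
  size xs = size s /\ forall C, C \in s -> exists2 x, List.In x xs & coset B (phi x) = C.
Proof.
elim: s => [|C s IHs] sGB; first by exists [::].
have [|xs [size_xs liftxs]] := IHs; first by move=> C' sC'; apply: sGB; rewrite inE sC' orbT.
have /morphimP [g _ Gg ->] := sGB C (mem_head _ _); have [x <-] := phi_onto Gg.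
exists (x :: xs); split=> [|C']; first by rewrite /= size_xs.
by rewrite inE => /predU1P [->|/liftxs [y xsy <-]]; [exists x; first left | exists y; first right].
Qed.

Lemma lift_generators d : (exists X : {set coset_of B}, #|X| <= d /\ <<X>>%g = (G / B)%g) ->
  exists xs : seq F, size xs <= d /\ forall f, gen_mod S xs f.
Proof.
case=> X [cardX genX]; have sXGB : {subset enum X <= G / B}%g.
  by move=> C; rewrite mem_enum -genX; apply: mem_gen.
have [xs [size_xs liftxs]] := lift_cosets sXGB.
exists xs; split=> [|f]; first by rewrite size_xs -cardE.
have lift_prod n (cC : 'I_n -> coset_of B) : (forall i, cC i \in X) ->
    exists2 w, gen_mod S xs w & coset B (phi w) = (\prod_(i < n) cC i)%g.
  elim: n cC => [|n IHn] cC XcC.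
    by exists gone; [apply: gen_one | rewrite big_ord0 ghom1 // morph1].
  have [w xsw phiw] := IHn (fun i => cC (widen_ord (leqnSn n) i)) (fun i => XcC _).
  have [x xsx phix] := liftxs _ (etrans (mem_enum _ _) (XcC ord_max)).
  exists (gmul w x); first by apply: gen_mul xsw _; apply: gen_in; left.
  by rewrite big_ord_recr /= phiM morphM ?(subsetP nBG) // -phiw -phix.
have /gen_prodgP [n [cC XcC defC]] : coset B (phi f) \in <<X>>%g.
  by rewrite genX; apply: mem_quotient.
have [w xsw phiw] := lift_prod n cC XcC.
rewrite -[f](gmulKVg w); apply: gen_mul xsw _; apply: gen_in; right; apply/Sdef.
apply: coset_idr; first by rewrite (subsetP nBG).
rewrite phiM ghomV // morphM ?morphV ?groupV ?(subsetP nBG) //.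
by change ((coset B (phi w))^-1 * coset B (phi f) = 1)%g; rewrite phiw -defC mulVg.
Qed.

End CentralExtensionPresentation.

Lemma expn_index_bound p k m d n : 0 < p -> m <= d ->
  (p ^ k) ^ (m * m.+1 ^ n) <= p ^ (d * k * (d + 1) ^ n).
Proof.
move=> p_gt0 le_md; rewrite -expnM; apply: leq_pexp2l p_gt0 _.
rewrite [d * k]mulnC -mulnA leq_mul // leq_mul // addn1.
by elim: n => // n IHn; rewrite !expnS leq_mul.
Qed.

Theorem mainTheorem2 (p c k d : nat) (gT : finGroupType) (G B : {group gT})
    (F : grp) (phi : F -> gT) (R S : F -> Prop) :
  prime p -> 1 <= c ->
  (p.-group G)%g -> (B \subset 'Z(G))%g -> cyclic B -> #|B| = p ^ k ->
  (exists X : {set coset_of B}, #|X| <= d /\ <<X>>%g = (G / B)%g) ->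
  is_free F ->
  (forall x y, phi (gmul x y) = (phi x * phi y)%g) ->
  (forall x, phi x \in G) ->
  (forall g, g \in G -> exists x, phi x = g) ->
  (forall x, R x <-> phi x = 1%g) ->
  (forall x, S x <-> phi x \in B) ->
  index_le (iter_comm S (@gfull F) c) (iter_comm R (@gfull F) c)
           (p ^ (d * k * (d + 1) ^ (c - 1))).
Proof.
move=> pr_p c_gt0 _ sBZ cycB oB genA _ phiM phiG phi_onto Rdef Sdef.
have nR := ker_normal phiM Rdef; have nS := preimage_normal phiM phiG Sdef sBZ.
have sRS := ker_sub_preimage Rdef Sdef; have cSF := comm_preimage_ker phiM phiG Rdef Sdef sBZ.
have [b [Sb RbN S_gen]] := cyclic_preimage_gen phiM phi_onto Rdef Sdef sBZ cycB.
have [xs [size_xs F_gen]] := lift_generators phiM phiG phi_onto Sdef sBZ genA.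
have N_gt0 : 0 < #|B| by rewrite oB expn_gt0 prime_gt0.
case: c c_gt0 => // n _; rewrite subn1 /=.
apply: index_le_leq (index_le_iter_comm nR nS sRS cSF N_gt0 Sb RbN S_gen F_gen n).
by rewrite oB expn_index_bound ?prime_gt0.
Qed.
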